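(* Let $\delta_n=\frac{n+2}{n+1}$ and $\mu_n=n^{3/2}$ ($n\ge0$), let $p_n=\mu_{n+1}/\mu_n=\big(\frac{n+1}{n}\big)^{3/2}$, and let $g_n$ ($n\ge1$) be defined by $g_1=\frac{\mu_2}{\mu_1}\big(\frac{2\delta_2}{\delta_3}+\frac{\delta_1}{\delta_3}+1\big)-\frac{\mu_3}{\mu_1}$ and, for $n\ge2$, $$g_n=\frac{\mu_{n+1}}{\mu_n\delta_{n+1}\delta_{n+2}}\Big[2\delta_{n+1}^2+\delta_n\delta_{n+1}+\delta_{n+1}\delta_{n+2}-\frac{\mu_{n+2}}{\mu_{n+1}}\delta_{n+1}\delta_{n+2}-\frac{\mu_{n-1}}{\mu_n}\delta_n\delta_{n+1}-\frac{\mu_{n+1}}{\mu_n g_{n-1}}\delta_n\delta_{n+1}\Big].$$ Then for every $n\in\mathbb{N}$, $p_np_{n+1}<g_n<p_np_{n+1}p_{n+2}$ (in particular every $g_n$ is well defined and positive). *)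

From Stdlib Require Import Reals.
Open Scope R_scope.

Definition delta (n : nat) : R := (INR n + 2) / (INR n + 1).

Definition mu (n : nat) : R := sqrt (INR n ^ 3).

Definition p (n : nat) : R := mu (n + 1) / mu n.

Definition g1 : R :=
  mu 2 / mu 1 * (2 * delta 2 / delta 3 + delta 1 / delta 3 + 1) - mu 3 / mu 1.

Definition gstep (n : nat) (gprev : R) : R :=
  mu (n + 1) / (mu n * delta (n + 1) * delta (n + 2)) *
  (2 * delta (n + 1) ^ 2 + delta n * delta (n + 1) + delta (n + 1) * delta (n + 2)
   - mu (n + 2) / mu (n + 1) * delta (n + 1) * delta (n + 2)
   - mu (n - 1) / mu n * delta n * delta (n + 1)
   - mu (n + 1) / (mu n * gprev) * delta n * delta (n + 1)).

(* g_n for n >= 1; g_0 is an unused dummy value (0). *)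
Fixpoint g (n : nat) : R :=
  match n with
  | O => 0
  | S m => match m with
           | O => g1
           | S _ => gstep n (g m)
           end
  end.

From Stdlib Require Import Reals Lra Lia.
Open Scope R_scope.

(* Write p_k = t * sqrt t with t = (k+1)/k.  Unfolding the
   recursion, g_{m+1} = F(g_m) for an explicit map F (step_map below) which is
   strictly increasing in its argument.  Hence the bounds propagate by induction,
     p_m p_{m+1} < g_m < p_m p_{m+1} p_{m+2}
       ==>  F(p_m p_{m+1}) < g_{m+1} < F(p_m p_{m+1} p_{m+2}),
   provided the two endpoint values satisfy F(p_m p_{m+1}) > p_{m+1} p_{m+2} and
   F(p_m p_{m+1} p_{m+2}) < p_{m+1} p_{m+2} p_{m+3}.  These "margin" inequalities
   only involve the numbers p_k and delta_k; replacing sqrt t by one Newton step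
   (and t / (Newton step), a lower bound) turns them into inequalities between
   rational functions of m, which are certified by an exact identity
   difference = P(m-1) / Q(m-1) where P, Q have positive coefficients. *)

(* succ_ratio x = (x + 1) / x: delta_n = succ_ratio (n + 1), p_n = succ_ratio n ^ (3/2). *)
Definition succ_ratio (x : R) : R := (x + 1) / x.

Lemma succ_ratio_pos (x : R) : 0 < x -> 0 < succ_ratio x.
Proof. intros Hx. unfold succ_ratio. apply Rdiv_lt_0_compat; lra. Qed.

Lemma div_le_div_l (c x y : R) : 0 <= c -> 0 < x -> x <= y -> c / y <= c / x.
Proof.
  intros Hc Hx Hxy. apply Rmult_le_compat_l; [exact Hc|].
  apply Rinv_le_contravar; assumption.
Qed.

(* Positivity of a polynomial in Horner form with nonnegative coefficients
   evaluated at a nonnegative point. *)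
Ltac horner_pos := repeat (first [ assumption | lra |
  apply Rplus_lt_le_0_compat | apply Rplus_le_le_0_compat | apply Rmult_le_pos ]).

(* Rational bounds for square roots: one Newton step from (1 + t) / 2. *)

Definition newton_sqrt (t : R) : R := ((1 + t) ^ 2 + 4 * t) / (4 * (1 + t)).

Lemma newton_sqrt_pos (t : R) : 0 <= t -> 0 < newton_sqrt t.
Proof. intros Ht. unfold newton_sqrt. apply Rdiv_lt_0_compat; nra. Qed.

(* Newton iterates overshoot: newton_sqrt t ^ 2 - t = (1 - t)^4 / (16 (1 + t)^2). *)
Lemma sqrt_le_newton_sqrt (t : R) : 0 <= t -> sqrt t <= newton_sqrt t.
Proof.
  intros Ht.
  pose proof (newton_sqrt_pos t Ht) as Hpos.
  rewrite <- (sqrt_pow2 (newton_sqrt t)) by lra.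
  apply sqrt_le_1_alt.
  assert (Gap : newton_sqrt t ^ 2 - t = ((1 - t) ^ 2) ^ 2 / (16 * (1 + t) ^ 2)).
  { unfold newton_sqrt. field. lra. }
  assert (0 <= ((1 - t) ^ 2) ^ 2 / (16 * (1 + t) ^ 2)).
  { apply Rmult_le_pos; [apply pow2_ge_0|].
    apply Rlt_le, Rinv_0_lt_compat. nra. }
  lra.
Qed.

(* Hence t / newton_sqrt t <= sqrt t, since t = sqrt t * sqrt t. *)
Lemma div_newton_sqrt_le_sqrt (t : R) : 0 <= t -> t / newton_sqrt t <= sqrt t.
Proof.
  intros Ht.
  pose proof (newton_sqrt_pos t Ht) as Hpos.
  pose proof (sqrt_le_newton_sqrt t Ht) as Hle.
  pose proof (sqrt_pos t) as Hs.
  apply (Rmult_le_reg_r (newton_sqrt t)); [exact Hpos|].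
  replace (t / newton_sqrt t * newton_sqrt t) with t by (field; lra).
  rewrite <- (sqrt_sqrt t) at 1 by exact Ht.
  apply Rmult_le_compat_l; assumption.
Qed.

Definition pow32_low (t : R) : R := t * t / newton_sqrt t.
Definition pow32_up (t : R) : R := t * newton_sqrt t.

Lemma pow32_low_pos (t : R) : 0 < t -> 0 < pow32_low t.
Proof.
  intros Ht. unfold pow32_low.
  apply Rdiv_lt_0_compat; [nra | apply newton_sqrt_pos; lra].
Qed.

Lemma pow32_bounds (t : R) : 0 < t -> pow32_low t <= t * sqrt t <= pow32_up t.
Proof.
  intros Ht. unfold pow32_low, pow32_up. split.
  - unfold Rdiv. rewrite Rmult_assoc.
    apply Rmult_le_compat_l; [lra|].
    apply div_newton_sqrt_le_sqrt; lra.
  - apply Rmult_le_compat_l; [lra|].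
    apply sqrt_le_newton_sqrt; lra.
Qed.

(* The two margin inequalities with the p's replaced by their rational bounds,
   for a real index M >= 1 (in the application M = m).  Each is proved by an
   exact identity  difference = P / Q  in the variable x = M - 1 >= 0, with P and Q
   polynomials with positive coefficients (found by computer algebra). *)

Lemma lower_margin_rational (M : R) : 1 <= M ->
  2 * pow32_up (succ_ratio (M + 2)) * succ_ratio (M + 3 + 1)
  + 2 * succ_ratio (M + 1 + 1) / pow32_low (succ_ratio M)
  < 2 * succ_ratio (M + 2 + 1) + succ_ratio (M + 1 + 1) + succ_ratio (M + 3 + 1).
Proof.
  intros HM. apply Rlt_0_minus.
  remember (M - 1) as x. assert (E : M = x + 1) by lra. subst M.
  assert (Hx : 0 <= x) by lra. clear Heqx HM.
  unfold pow32_up, pow32_low, newton_sqrt, succ_ratio.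
  match goal with |- 0 < ?e => replace e with ((4285440 + x * (13428288 + x * (18006840 + x * (13604240 + x * (6395784 + x * (1943048 + x * (381664 + x * (46728 + x * (3232 + x * (96)))))))))) / (10886400 + x * (42845760 + x * (75534336 + x * (78776208 + x * (54027936 + x * (25596464 + x * (8550784 + x * (2014768 + x * (328224 + x * (35216 + x * (2240 + x * (64))))))))))))) end.
  2:{ field; repeat split; nra. }
  apply Rdiv_lt_0_compat; horner_pos.
Qed.

Lemma upper_margin_rational (M : R) : 1 <= M ->
  2 * succ_ratio (M + 2 + 1) + succ_ratio (M + 1 + 1) + succ_ratio (M + 3 + 1)
  - pow32_low (succ_ratio (M + 2)) * succ_ratio (M + 3 + 1)
  - succ_ratio (M + 1 + 1) / pow32_up (succ_ratio M)
  - succ_ratio (M + 1 + 1) / (pow32_up (succ_ratio M) * pow32_up (succ_ratio (M + 2)))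
  < pow32_low (succ_ratio (M + 2)) * pow32_low (succ_ratio (M + 3)) * succ_ratio (M + 3 + 1).
Proof.
  intros HM. apply Rlt_0_minus.
  remember (M - 1) as x. assert (E : M = x + 1) by lra. subst M.
  assert (Hx : 0 <= x) by lra. clear Heqx HM.
  unfold pow32_up, pow32_low, newton_sqrt, succ_ratio.
  match goal with |- 0 < ?e => replace e with ((56836144532764800 + x * (493147165090518720 + x * (2025762501084711912 + x * (5242009447503449592 + x * (9591241496537777138 + x * (13203170444697861244 + x * (14205781040711268350 + x * (12251153721260643312 + x * (8616445261602763422 + x * (5001912068120338852 + x * (2416292995766240362 + x * (976356030489059024 + x * (330856773450684784 + x * (94048009129588344 + x * (22377734124782256 + x * (4436105709470960 + x * (727027362554240 + x * (97370007395840 + x * (10477917789184 + x * (883698378752 + x * (56244576256 + x * (2539520000 + x * (72482816 + x * (983040)))))))))))))))))))))))) / (330213765444192000 + x * (2978316764842651200 + x * (12758853598339634640 + x * (34571055797020147356 + x * (66558218111490320088 + x * (96959962807853856175 + x * (111121375758750457690 + x * (102830491335230377450 + x * (78245838101955976274 + x * (49596111754204261904 + x * (26429929472962929182 + x * (11917568805257159882 + x * (4565625572764282958 + x * (1489153202605404929 + x * (413617145857069248 + x * (97669739199740400 + x * (19536002271492480 + x * (3290308649253824 + x * (462534771531776 + x * (53595545397248 + x * (5029235236864 + x * (372542205952 + x * (20963393536 + x * (841940992 + x * (21495808 + x * (262144))))))))))))))))))))))))))) end.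
  2:{ field; repeat split; nra. }
  apply Rdiv_lt_0_compat; horner_pos.
Qed.

(* With a0, a1, a2 standing for p_{n-1}, p_n,
   p_{n+1} and d0, d1, d2 for delta_n, delta_{n+1}, delta_{n+2}, the recursion
   reads g_n = step_map a0 a1 a2 d0 d1 d2 g_{n-1}. *)

Definition step_map (a0 a1 a2 d0 d1 d2 G : R) : R :=
  a1 / (d1 * d2) *
  (2 * d1 ^ 2 + d0 * d1 + d1 * d2 - a2 * d1 * d2 - d0 * d1 / a0 - a1 * d0 * d1 / G).

(* G enters only through the term - a1^2 d0 / (d2 G), so step_map is increasing. *)
Lemma step_map_increasing (a0 a1 a2 d0 d1 d2 G G' : R) :
  0 < a0 -> 0 < a1 -> 0 < d0 -> 0 < d1 -> 0 < d2 -> 0 < G -> G < G' ->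
  step_map a0 a1 a2 d0 d1 d2 G < step_map a0 a1 a2 d0 d1 d2 G'.
Proof.
  intros Ha0 Ha1 Hd0 Hd1 Hd2 HG HGG'. apply Rlt_0_minus.
  assert (Hinv : / G' < / G) by (apply Rinv_lt_contravar; nra).
  replace (step_map a0 a1 a2 d0 d1 d2 G' - step_map a0 a1 a2 d0 d1 d2 G)
    with (a1 * a1 * d0 / d2 * (/ G - / G')) by (unfold step_map; field; repeat split; lra).
  apply Rmult_lt_0_compat; [|lra].
  apply Rdiv_lt_0_compat; [apply Rmult_lt_0_compat; nra | lra].
Qed.

Lemma step_map_at_lower_end (a0 a1 a2 d0 d1 d2 : R) :
  0 < a0 -> 0 < a1 -> 0 < d1 -> 0 < d2 ->
  step_map a0 a1 a2 d0 d1 d2 (a0 * a1) - a1 * a2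
  = a1 / d2 * (2 * d1 + d0 + d2 - (2 * a2 * d2 + 2 * d0 / a0)).
Proof. intros. unfold step_map. field. lra. Qed.

Lemma step_map_at_upper_end (a0 a1 a2 a3 d0 d1 d2 : R) :
  0 < a0 -> 0 < a1 -> 0 < a2 -> 0 < d1 -> 0 < d2 ->
  a1 * a2 * a3 - step_map a0 a1 a2 d0 d1 d2 (a0 * a1 * a2)
  = a1 / d2 * (a2 * a3 * d2
       - (2 * d1 + d0 + d2 - a2 * d2 - d0 / a0 - d0 / (a0 * a2))).
Proof. intros. unfold step_map. field. lra. Qed.

Lemma step_map_bounds (a0 a1 a2 a3 d0 d1 d2 G : R) :
  0 < a0 -> 0 < a1 -> 0 < a2 -> 0 < d0 -> 0 < d1 -> 0 < d2 ->
  2 * a2 * d2 + 2 * d0 / a0 < 2 * d1 + d0 + d2 ->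
  2 * d1 + d0 + d2 - a2 * d2 - d0 / a0 - d0 / (a0 * a2) < a2 * a3 * d2 ->
  a0 * a1 < G < a0 * a1 * a2 ->
  a1 * a2 < step_map a0 a1 a2 d0 d1 d2 G < a1 * a2 * a3.
Proof.
  intros Ha0 Ha1 Ha2 Hd0 Hd1 Hd2 Hlow Hup [HG1 HG2].
  assert (Hc : 0 < a1 / d2) by (apply Rdiv_lt_0_compat; lra).
  assert (HG : 0 < G) by nra.
  split.
  - assert (Hend : a1 * a2 < step_map a0 a1 a2 d0 d1 d2 (a0 * a1)).
    { apply Rlt_0_minus. rewrite step_map_at_lower_end by lra.
      apply Rmult_lt_0_compat; lra. }
    pose proof (step_map_increasing a0 a1 a2 d0 d1 d2 (a0 * a1) G) as Hinc.
    assert (0 < a0 * a1) by nra.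
    specialize (Hinc Ha0 Ha1 Hd0 Hd1 Hd2 ltac:(lra) HG1). lra.
  - assert (Hend : step_map a0 a1 a2 d0 d1 d2 (a0 * a1 * a2) < a1 * a2 * a3).
    { apply Rlt_0_minus. rewrite step_map_at_upper_end by lra.
      apply Rmult_lt_0_compat; lra. }
    pose proof (step_map_increasing a0 a1 a2 d0 d1 d2 G (a0 * a1 * a2)) as Hinc.
    specialize (Hinc Ha0 Ha1 Hd0 Hd1 Hd2 HG HG2). lra.
Qed.

Lemma mu_pos (k : nat) : (1 <= k)%nat -> 0 < mu k.
Proof.
  intros Hk. unfold mu. apply sqrt_lt_R0, pow_lt.
  apply lt_0_INR. lia.
Qed.

Lemma sqrt_cube (x : R) : 0 <= x -> sqrt (x ^ 3) = x * sqrt x.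
Proof.
  intros Hx. replace (x ^ 3) with (x ^ 2 * x) by ring.
  rewrite sqrt_mult by (try apply pow2_ge_0; lra).
  now rewrite sqrt_pow2.
Qed.

Lemma p_closed_form (k : nat) : (1 <= k)%nat ->
  p k = succ_ratio (INR k) * sqrt (succ_ratio (INR k)).
Proof.
  intros Hk.
  assert (HK : 0 < INR k) by (apply lt_0_INR; lia).
  assert (HsK : 0 < sqrt (INR k)) by (apply sqrt_lt_R0; lra).
  unfold p, mu, succ_ratio. rewrite plus_INR. change (INR 1) with 1.
  rewrite !sqrt_cube by lra. rewrite sqrt_div_alt by lra.
  field. lra.
Qed.

Lemma p_bounds (k : nat) : (1 <= k)%nat ->
  pow32_low (succ_ratio (INR k)) <= p k <= pow32_up (succ_ratio (INR k)).
Proof.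
  intros Hk. rewrite p_closed_form by exact Hk.
  apply pow32_bounds, succ_ratio_pos, lt_0_INR. lia.
Qed.

Lemma p_pos (k : nat) : (1 <= k)%nat -> 0 < p k.
Proof.
  intros Hk. pose proof (p_bounds k Hk) as [Hlow _].
  pose proof (pow32_low_pos (succ_ratio (INR k))) as Hpos.
  assert (0 < succ_ratio (INR k)) by (apply succ_ratio_pos, lt_0_INR; lia).
  lra.
Qed.

Lemma delta_closed_form (n : nat) : delta n = succ_ratio (INR n + 1).
Proof. unfold delta, succ_ratio. f_equal. ring. Qed.

Lemma delta_pos (n : nat) : 0 < delta n.
Proof. rewrite delta_closed_form. apply succ_ratio_pos. pose proof (pos_INR n). lra. Qed.

Lemma INR_shifts (m : nat) :
  INR (m + 1) = INR m + 1 /\ INR (m + 2) = INR m + 2 /\ INR (m + 3) = INR m + 3.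
Proof. rewrite !plus_INR. simpl. repeat split; ring. Qed.

Lemma lower_margin (m : nat) : (1 <= m)%nat ->
  2 * p (m + 2) * delta (m + 3) + 2 * delta (m + 1) / p m
  < 2 * delta (m + 2) + delta (m + 1) + delta (m + 3).
Proof.
  intros Hm.
  pose proof (p_bounds m Hm) as [L0 _].
  pose proof (p_bounds (m + 2) ltac:(lia)) as [_ U2].
  pose proof (delta_pos (m + 1)) as Hd0. pose proof (delta_pos (m + 3)) as Hd2.
  assert (HL0 : 0 < pow32_low (succ_ratio (INR m))).
  { apply pow32_low_pos, succ_ratio_pos, lt_0_INR. lia. }
  assert (Ha2 : p (m + 2) * delta (m + 3)
                <= pow32_up (succ_ratio (INR (m + 2))) * delta (m + 3))
    by (apply Rmult_le_compat_r; lra).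
  assert (Ha0 : delta (m + 1) / p m <= delta (m + 1) / pow32_low (succ_ratio (INR m)))
    by (apply div_le_div_l; lra).
  pose proof (lower_margin_rational (INR m)) as Hrat.
  assert (HM : 1 <= INR m) by (apply (le_INR 1); exact Hm).
  destruct (INR_shifts m) as (I1 & I2 & I3).
  rewrite !delta_closed_form, I1, I2, I3 in *.
  specialize (Hrat HM). lra.
Qed.

Lemma upper_margin (m : nat) : (1 <= m)%nat ->
  2 * delta (m + 2) + delta (m + 1) + delta (m + 3)
  - p (m + 2) * delta (m + 3) - delta (m + 1) / p m - delta (m + 1) / (p m * p (m + 2))
  < p (m + 2) * p (m + 3) * delta (m + 3).
Proof.
  intros Hm.
  pose proof (p_bounds m Hm) as [_ U0].
  pose proof (p_bounds (m + 2) ltac:(lia)) as [L2 U2].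
  pose proof (p_bounds (m + 3) ltac:(lia)) as [L3 _].
  pose proof (p_pos m Hm) as Ha0.
  pose proof (p_pos (m + 2) ltac:(lia)) as Ha2.
  pose proof (delta_pos (m + 1)) as Hd0. pose proof (delta_pos (m + 3)) as Hd2.
  assert (HL2 : 0 < pow32_low (succ_ratio (INR (m + 2)))).
  { apply pow32_low_pos, succ_ratio_pos, lt_0_INR. lia. }
  assert (HL3 : 0 < pow32_low (succ_ratio (INR (m + 3)))).
  { apply pow32_low_pos, succ_ratio_pos, lt_0_INR. lia. }
  assert (B2 : pow32_low (succ_ratio (INR (m + 2))) * delta (m + 3) <= p (m + 2) * delta (m + 3))
    by (apply Rmult_le_compat_r; lra).
  assert (B0 : delta (m + 1) / pow32_up (succ_ratio (INR m)) <= delta (m + 1) / p m)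
    by (apply div_le_div_l; lra).
  assert (B02 : delta (m + 1) / (pow32_up (succ_ratio (INR m)) * pow32_up (succ_ratio (INR (m + 2))))
                <= delta (m + 1) / (p m * p (m + 2))).
  { apply div_le_div_l; [lra | nra |]. apply Rmult_le_compat; lra. }
  assert (B23 : pow32_low (succ_ratio (INR (m + 2))) * pow32_low (succ_ratio (INR (m + 3)))
                * delta (m + 3) <= p (m + 2) * p (m + 3) * delta (m + 3)).
  { apply Rmult_le_compat_r; [lra|]. apply Rmult_le_compat; lra. }
  pose proof (upper_margin_rational (INR m)) as Hrat.
  assert (HM : 1 <= INR m) by (apply (le_INR 1); exact Hm).
  destruct (INR_shifts m) as (I1 & I2 & I3).
  rewrite !delta_closed_form, I1, I2, I3 in *.
  specialize (Hrat HM). lra.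
Qed.

Lemma g_succ (m : nat) : (1 <= m)%nat -> g (m + 1) = gstep (m + 1) (g m).
Proof. intros Hm. destruct m as [|m]; [lia|]. rewrite Nat.add_1_r. reflexivity. Qed.

Lemma gstep_as_step_map (m : nat) (G : R) : (1 <= m)%nat -> 0 < G ->
  gstep (m + 1) G
  = step_map (p m) (p (m + 1)) (p (m + 2)) (delta (m + 1)) (delta (m + 2)) (delta (m + 3)) G.
Proof.
  intros Hm HG.
  pose proof (mu_pos m Hm). pose proof (mu_pos (m + 1) ltac:(lia)).
  pose proof (mu_pos (m + 2) ltac:(lia)).
  pose proof (delta_pos (m + 2)). pose proof (delta_pos (m + 3)).
  unfold gstep, step_map, p.
  replace (m + 1 - 1)%nat with m by lia.
  replace (m + 1 + 1)%nat with (m + 2)%nat by lia.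
  replace (m + 1 + 2)%nat with (m + 3)%nat by lia.
  replace (m + 2 + 1)%nat with (m + 3)%nat by lia.
  field. repeat split; lra.
Qed.

Lemma g_bounds_step (m : nat) : (1 <= m)%nat ->
  p m * p (m + 1) < g m < p m * p (m + 1) * p (m + 2) ->
  p (m + 1) * p (m + 2) < g (m + 1) < p (m + 1) * p (m + 2) * p (m + 3).
Proof.
  intros Hm IH.
  pose proof (p_pos m Hm) as Ha0. pose proof (p_pos (m + 1) ltac:(lia)) as Ha1.
  pose proof (p_pos (m + 2) ltac:(lia)) as Ha2.
  assert (HG : 0 < g m) by nra.
  rewrite g_succ, gstep_as_step_map by assumption.
  apply step_map_bounds; try apply delta_pos; try assumption.
  - exact (lower_margin m Hm).
  - exact (upper_margin m Hm).
Qed.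

Lemma g1_bounds : p 1 * p 2 < g 1 < p 1 * p 2 * p 3.
Proof.
  assert (M1 : mu 1 = 1) by (unfold mu; replace (INR 1 ^ 3) with 1 by (simpl; ring); apply sqrt_1).
  assert (M2 : mu 2 = 2 * sqrt 2).
  { unfold mu. replace (INR 2) with 2 by (simpl; ring). apply sqrt_cube; lra. }
  assert (M3 : mu 3 = 3 * sqrt 3).
  { unfold mu. replace (INR 3) with 3 by (simpl; ring). apply sqrt_cube; lra. }
  assert (M4 : mu 4 = 8).
  { unfold mu. replace (INR 4 ^ 3) with (8 ^ 2) by (simpl; ring). apply sqrt_pow2; lra. }
  assert (S2 : sqrt 2 * sqrt 2 = 2) by (apply sqrt_sqrt; lra).
  assert (S3 : sqrt 3 * sqrt 3 = 3) by (apply sqrt_sqrt; lra).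
  pose proof (sqrt_pos 2). pose proof (sqrt_pos 3).
  assert (R2 : 1.414 < sqrt 2 < 1.4143) by nra.
  assert (R3 : 1.732 < sqrt 3 < 1.7321) by nra.
  assert (P12 : p 1 * p 2 = 3 * sqrt 3).
  { unfold p. simpl Nat.add. rewrite M1, M2, M3. field. lra. }
  assert (P123 : p 1 * p 2 * p 3 = 8).
  { unfold p. simpl Nat.add. rewrite M1, M2, M3, M4. field. lra. }
  assert (G1 : g 1 = 26 * sqrt 2 / 3 - 3 * sqrt 3).
  { simpl g. unfold g1, delta. rewrite M1, M2, M3. simpl INR. field. }
  rewrite P123, P12, G1. lra.
Qed.

Theorem lemma4p2 : forall n : nat, (1 <= n)%nat ->
  p n * p (n + 1) < g n /\ g n < p n * p (n + 1) * p (n + 2).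
Proof.
  intros n Hn. induction n as [|m IH]; [lia|].
  destruct (Nat.eq_dec m 0) as [->|Hm]; [exact g1_bounds|].
  replace (S m) with (m + 1)%nat by lia.
  replace (m + 1 + 1)%nat with (m + 2)%nat by lia.
  replace (m + 1 + 2)%nat with (m + 3)%nat by lia.
  apply g_bounds_step; [lia|].
  apply IH. lia.
Qed.
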